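(* Let $n\in\mathbb{N}_0$ and $v\in\mathbb{P}_n([0,1])$. For each $\mathrm{Z}\in\{\mathrm{I},\mathrm{II},\mathrm{III}\}$ there exists a unique $u^{\mathrm{Z}}\in\mathbb{P}^\perp_{n,n-1}(\widehat T)$ with $v=\gamma^{\mathrm{Z}}u^{\mathrm{Z}}$. Consequently the linear extension operator $\mathcal{E}^{\mathrm{Z}}:\mathbb{P}_n([0,1])\to\mathbb{P}^\perp_{n,n-1}(\widehat T)$, $\mathcal{E}^{\mathrm{Z}}v:=u^{\mathrm{Z}}$, is well defined.
   Context: $\widehat T$ is the triangle with vertices $(0,0),(1,0),(0,1)$. $\mathbb{P}^\perp_{0,-1}(\widehat T)=\mathbb{P}_0(\widehat T)$, and for $n\ge1$, $\mathbb{P}^\perp_{n,n-1}(\widehat T):=\{u\in\mathbb{P}_n(\widehat T):\int_{\widehat T}uv=0\ \forall v\in\mathbb{P}_{n-1}(\widehat T)\}$, where $\mathbb{P}_m$ denotes polynomials of total degree $\le m$. Restriction operators: $\gamma^{\mathrm{I}}u:=u(\cdot,0)$, $\gamma^{\mathrm{II}}u:=u(0,\cdot)$, $\gamma^{\mathrm{III}}u:=u(1-\cdot,\cdot)$ (functions on $[0,1]$). *)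

From Stdlib Require Import Reals Lra Lia Arith.
From Coquelicot Require Import Coquelicot.
Open Scope R_scope.

Definition is_poly1 (n : nat) (v : R -> R) : Prop :=
  exists c : nat -> R, forall t, v t = sum_n (fun k => c k * t ^ k) n.

Definition is_poly2 (n : nat) (u : R -> R -> R) : Prop :=
  exists c : nat -> nat -> R, forall x y,
    u x y = sum_n (fun i => sum_n (fun j =>
              if (i + j <=? n)%nat then c i j * x ^ i * y ^ j else 0) n) n.

Definition int_T (f : R -> R -> R) : R :=
  RInt (fun x => RInt (fun y => f x y) 0 (1 - x)) 0 1.

Definition Pperp (n : nat) (u : R -> R -> R) : Prop :=
  is_poly2 n u /\
  match n with
  | O => True
  | S m => forall w, is_poly2 m w -> int_T (fun x y => u x y * w x y) = 0
  end.

Inductive edge := EI | EII | EIII.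

Definition gamma (Z : edge) (u : R -> R -> R) (t : R) : R :=
  match Z with
  | EI => u t 0
  | EII => u 0 t
  | EIII => u (1 - t) t
  end.

(* Uniqueness: for n > 0, a u in P^perp_{n,n-1} with zero trace on an edge factors as
   u = l w, where l is the barycentric coordinate vanishing on that edge and w has
   degree n - 1; orthogonality of u to w gives int_T (l w^2) = 0, and l > 0 inside the
   triangle forces w = 0.  Existence: the linear map sending u in P_n to its moments
   against the monomials of degree < n and to its trace values at n + 1 nodes is
   injective by the uniqueness argument, and its source and target both have dimension
   (n+1)(n+2)/2, so it is onto.  Linearity of the extension operator then follows from
   uniqueness. *)

From HB Require Import structures.
Set Warnings "-notation-overridden -ambiguous-paths -redundant-canonical-projection".
From Stdlib Require Import Reals Lra FunctionalExtensionality ClassicalEpsilon.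
From Coquelicot Require Import Coquelicot.
From mathcomp Require Import ssreflect ssrfun ssrbool eqtype ssrnat seq fintype.
From mathcomp Require Import bigop ssralg poly matrix vector Rstruct zify.
Import GRing.Theory.
Open Scope R_scope.
Set Implicit Arguments.
Unset Strict Implicit.

Ltac rring := rewrite /= -?RmultE -?RplusE -?RoppE -?RminusE -?R0E -?R1E; ring.

(** * Polynomials in two variables *)

Definition bisum (c : nat -> nat -> R) (K : nat) (x y : R) : R :=
  (\sum_(0 <= i < K) \sum_(0 <= j < K) (c i j * x ^ i * y ^ j : R))%R.

Definition bipoly (n : nat) (f : R -> R -> R) : Prop :=
  exists c : nat -> nat -> R, (forall i j, (n < i + j)%N -> c i j = 0) /\
    forall x y, f x y = bisum c n.+1 x y.

Lemma sum_nE (f : nat -> R) n : sum_n f n = (\sum_(0 <= i < n.+1) f i)%R.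
Proof.
elim: n => [|n IH]; first by rewrite sum_O big_nat1.
by rewrite sum_Sn IH (big_nat_recr n.+1).
Qed.

Lemma bisum_ext c d K x y : (forall i j, c i j = d i j) -> bisum c K x y = bisum d K x y.
Proof. by move=> e; apply: eq_bigr => i _; apply: eq_bigr => j _; rewrite e. Qed.

Lemma bisumD c d K x y :
  bisum (fun i j => c i j + d i j) K x y = bisum c K x y + bisum d K x y.
Proof.
rewrite /bisum -big_split; apply: eq_bigr => i _; rewrite -big_split.
by apply: eq_bigr => j _; rring.
Qed.

Lemma bisumZ k c K x y : bisum (fun i j => k * c i j) K x y = k * bisum c K x y.
Proof.
rewrite /bisum RmultE mulr_sumr; apply: eq_bigr => i _; rewrite mulr_sumr.
by apply: eq_bigr => j _; rring.
Qed.

Lemma bisum_swap c K x y :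
  bisum c K x y = (\sum_(0 <= j < K) (\sum_(0 <= i < K) c i j * x ^ i) * y ^ j)%R.
Proof.
rewrite /bisum exchange_big_nat; apply: eq_bigr => j _.
by rewrite mulr_suml; apply: eq_bigr => i _; rring.
Qed.

Lemma bisum_y0 c K x : bisum c K.+1 x 0 = (\sum_(0 <= i < K.+1) c i 0%N * x ^ i)%R.
Proof.
apply: eq_bigr => i _; rewrite big_nat_recl // big1 ?addr0 => [|j _]; rring.
Qed.

Lemma bisum_widen c K x y : (forall j, c K j = 0) -> (forall i, c i K = 0) ->
  bisum c K.+1 x y = bisum c K x y.
Proof.
move=> cK0 c0K; rewrite /bisum big_nat_recr //=.
rewrite [X in (_ + X)%R]big1 ?addr0 => [|j _]; last by rewrite cK0; rring.
by apply: eq_bigr => i _; rewrite big_nat_recr //= c0K !Rmult_0_l addr0.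
Qed.

Lemma bipoly_ext n f g : (forall x y, f x y = g x y) -> bipoly n f -> bipoly n g.
Proof. by move=> e [c [c0 hf]]; exists c; split=> // x y; rewrite -e. Qed.

Lemma bipoly_widen n m f : (n <= m)%N -> bipoly n f -> bipoly m f.
Proof.
move=> nm [c [c0 hf]]; exists c; split=> [i j h|x y]; first by apply: c0; lia.
rewrite hf -(subnKC nm); elim: (m - n)%N => [|k ->]; first by rewrite addn0.
by rewrite addnS [RHS]bisum_widen // => [j|i]; apply: c0; lia.
Qed.

Lemma bipoly_cst n k : bipoly n (fun _ _ => k).
Proof.
apply: (@bipoly_widen 0); first lia.
exists (fun i j => if (i + j == 0)%N then k else 0); split.
  by move=> i j h; case: ifP => // /eqP; lia.
by move=> x y; rewrite /bisum !big_nat1 /=; ring.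
Qed.

Lemma bipolyD n f g : bipoly n f -> bipoly n g -> bipoly n (fun x y => f x y + g x y).
Proof.
move=> [c [c0 hf]] [d [d0 hg]]; exists (fun i j => c i j + d i j); split.
  by move=> i j h; rewrite c0 // d0 //; ring.
by move=> x y; rewrite bisumD hf hg.
Qed.

Lemma bipolyZ n k f : bipoly n f -> bipoly n (fun x y => k * f x y).
Proof.
move=> [c [c0 hf]]; exists (fun i j => k * c i j); split.
  by move=> i j h; rewrite c0 //; ring.
by move=> x y; rewrite bisumZ hf.
Qed.

Lemma bipoly_sum n N (F : nat -> R -> R -> R) :
  (forall k, (k < N)%N -> bipoly n (F k)) ->
  bipoly n (fun x y => \sum_(0 <= k < N) F k x y)%R.
Proof.
elim: N => [|N IH] hF.
  by apply: bipoly_ext (bipoly_cst n 0) => x y; rewrite big_geq.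
apply: bipoly_ext (bipolyD (IH _) (hF N _)) => [x y|k kN|]; last by [].
- by rewrite big_nat_recr.
- by apply: hF; lia.
Qed.

Lemma bipoly_swap n f : bipoly n f -> bipoly n (fun x y => f y x).
Proof.
move=> [c [c0 hf]]; exists (fun i j => c j i); split=> [i j h|x y].
  by apply: c0; lia.
rewrite hf /bisum exchange_big_nat; apply: eq_bigr => i _; apply: eq_bigr => j _; rring.
Qed.

Lemma bipoly_mulx n f : bipoly n f -> bipoly n.+1 (fun x y => x * f x y).
Proof.
move=> [c [c0 hf]]; exists (fun i j => if i is i'.+1 then c i' j else 0); split.
  by move=> [|i] j h //; apply: c0; lia.
move=> x y; rewrite hf; symmetry; rewrite {1}/bisum big_nat_recl // big1 ?add0r => [|j _]; last by rring.
rewrite RmultE /bisum mulr_sumr; apply: eq_bigr => i _; rewrite big_nat_recr //= c0; last lia.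
rewrite Rmult_0_l Rmult_0_l addr0 mulr_sumr; apply: eq_bigr => j _; rring.
Qed.

Lemma bipoly_muly n f : bipoly n f -> bipoly n.+1 (fun x y => y * f x y).
Proof.
move/bipoly_swap/bipoly_mulx/bipoly_swap; exact: bipoly_ext.
Qed.

Lemma bipoly_mulxn n i f : bipoly n f -> bipoly (n + i) (fun x y => x ^ i * f x y).
Proof.
move=> hf; elim: i => [|i IH]; first by rewrite addn0; apply: bipoly_ext hf => x y /=; ring.
by rewrite addnS; apply: bipoly_ext (bipoly_mulx IH) => x y /=; ring.
Qed.

Lemma bipoly_mulyn n j f : bipoly n f -> bipoly (n + j) (fun x y => y ^ j * f x y).
Proof.
move=> hf; elim: j => [|j IH]; first by rewrite addn0; apply: bipoly_ext hf => x y /=; ring.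
by rewrite addnS; apply: bipoly_ext (bipoly_muly IH) => x y /=; ring.
Qed.

Lemma bipoly_monom m i j k : (i + j <= m)%N -> bipoly m (fun x y => k * x ^ i * y ^ j).
Proof.
move=> hij; apply: bipoly_widen hij _.
have := bipoly_mulxn i (bipoly_mulyn j (bipoly_cst 0 k)); rewrite add0n addnC.
by apply: bipoly_ext => x y; ring.
Qed.

Lemma bipoly_coef_sum d m c K (G : nat -> nat -> R -> R -> R) :
  (forall i j, (d < i + j)%N -> c i j = 0) ->
  (forall i j, (i + j <= d)%N -> bipoly m (G i j)) ->
  bipoly m (fun x y => \sum_(0 <= i < K) \sum_(0 <= j < K) (c i j * G i j x y : R))%R.
Proof.
move=> c0 hG; apply: bipoly_sum => i _; apply: bipoly_sum => j _.
case: (ltnP d (i + j)) => hij; last exact/bipolyZ/hG.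
by apply: bipoly_ext (bipoly_cst m 0) => x y; rewrite c0 //; ring.
Qed.

Lemma bipoly_bisum m c K :
  (forall i j, (m < i + j)%N -> c i j = 0) -> bipoly m (bisum c K).
Proof.
move=> c0; apply: bipoly_ext (bipoly_coef_sum (G := fun i j x y => x ^ i * y ^ j) K c0 _).
  by move=> x y; apply: eq_bigr => i _; apply: eq_bigr => j _; ring.
by move=> i j hij; apply: bipoly_ext (bipoly_monom 1 hij) => x y; ring.
Qed.

Lemma bipolyM a b f g : bipoly a f -> bipoly b g -> bipoly (a + b) (fun x y => f x y * g x y).
Proof.
move=> [c [c0 hf]] hg.
apply: bipoly_ext (bipoly_coef_sum (m := a + b) (G := fun i j x y => x ^ i * y ^ j * g x y) a.+1 c0 _).
  move=> x y; rewrite hf /bisum RmultE mulr_suml; apply: eq_bigr => i _.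
  by rewrite mulr_suml; apply: eq_bigr => j _; rring.
move=> i j hij; apply: (@bipoly_widen (b + j + i)); first lia.
by apply: bipoly_ext (bipoly_mulxn i (bipoly_mulyn j hg)) => x y; ring.
Qed.

Lemma bipolyX i p : bipoly 1 p -> bipoly i (fun x y => p x y ^ i).
Proof.
move=> hp; elim: i => [|i IH]; first exact: bipoly_cst.
exact: bipoly_ext (bipolyM hp IH).
Qed.

Lemma bipoly_comp n u p q : bipoly n u -> bipoly 1 p -> bipoly 1 q ->
  bipoly n (fun x y => u (p x y) (q x y)).
Proof.
move=> [c [c0 hu]] hp hq.
apply: bipoly_ext (bipoly_coef_sum (G := fun i j x y => p x y ^ i * q x y ^ j) n.+1 c0 _).
  by move=> x y; rewrite hu; apply: eq_bigr => i _; apply: eq_bigr => j _; ring.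
by move=> i j hij; apply: bipoly_widen hij (bipolyM (bipolyX i hp) (bipolyX j hq)).
Qed.

Lemma bipoly_affine a b k : bipoly 1 (fun x y => k + a * x + b * y).
Proof.
have := bipolyD (bipolyD (bipoly_cst 1 k) (bipoly_monom a (i := 1) (j := 0) (leqnn 1)))
                (bipoly_monom b (i := 0) (j := 1) (leqnn 1)).
by apply: bipoly_ext => x y; ring.
Qed.

Lemma bipoly_x : bipoly 1 (fun x y => x).
Proof. by apply: bipoly_ext (bipoly_affine 1 0 0) => x y; ring. Qed.

Lemma bipoly_y : bipoly 1 (fun x y => y).
Proof. by apply: bipoly_ext (bipoly_affine 0 1 0) => x y; ring. Qed.

Lemma is_poly2_bipoly n u : is_poly2 n u <-> bipoly n u.
Proof.
split=> [[c hc]|[c [c0 hu]]].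
  exists (fun i j => if (i + j <=? n)%nat then c i j else 0); split.
    by move=> i j h; case: (Nat.leb_spec0 (i + j) n) => // h'; lia.
  move=> x y; rewrite hc sum_nE; apply: eq_bigr => i _; rewrite sum_nE.
  by apply: eq_bigr => j _; case: (Nat.leb_spec0 (i + j) n) => _; rring.
exists c => x y; rewrite hu sum_nE; apply: eq_bigr => i _; rewrite sum_nE.
apply: eq_bigr => j _; case: (Nat.leb_spec0 (i + j) n) => // h.
by rewrite c0; [rring | lia].
Qed.

Lemma is_poly1_bipoly n v : is_poly1 n v -> bipoly n (fun x _ => v x).
Proof.
move=> [c hc].
apply: (@bipoly_ext _ (fun x y => \sum_(0 <= i < n.+1) (c i * x ^ i * y ^ 0 : R))%R).
  by move=> x y; rewrite hc sum_nE; apply: eq_bigr => i _; rring.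
by apply: bipoly_sum => i hi; apply: bipoly_monom; lia.
Qed.

Lemma is_poly1_lin n v w a b : is_poly1 n v -> is_poly1 n w ->
  is_poly1 n (fun t => a * v t + b * w t).
Proof.
move=> [c hc] [d hd]; exists (fun k => a * c k + b * d k) => t.
rewrite hc hd !sum_nE RmultE mulr_sumr RmultE mulr_sumr RplusE -big_split.
by apply: eq_bigr => k _; rring.
Qed.

(** * Vanishing on interpolation nodes *)

(* The nodes lie in (0, 1/3], so the box (0, 1/3]^2 they span lies inside the triangle. *)
Definition node (k : nat) : R := / (INR k + 3).

Lemma node_bounds k : 0 < node k <= / 3.
Proof.
have h := pos_INR k; split; first by apply: Rinv_0_lt_compat; lra.
apply: Rinv_le_contravar; lra.
Qed.

Lemma node_inj : injective node.
Proof.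
move=> a b e; have ha := pos_INR a; have hb := pos_INR b.
have : INR a + 3 = INR b + 3 by apply: Rinv_eq_reg.
by move=> e'; apply: INR_eq; lra.
Qed.

Lemma coef_eq0_of_nodes K (d : nat -> R) :
  (forall k, (k < K)%N -> (\sum_(0 <= i < K) d i * node k ^ i)%R = 0) ->
  forall i, (i < K)%N -> d i = 0.
Proof.
move=> h i hi.
have p0 : (\poly_(i < K) d i)%R = 0%R :> {poly R}.
  apply: (@roots_geq_poly_eq0 _ _ [seq node k | k <- iota 0 K]).
  - apply/allP => r /mapP [k hk ->]; rewrite /root horner_poly; apply/eqP.
    rewrite mem_iota in hk; rewrite -[RHS](h k); last by lia.
    by rewrite big_mkord; apply: eq_bigr => j _; rewrite RpowE.
  - by rewrite map_inj_uniq ?iota_uniq //; apply: node_inj.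
  - by rewrite size_map size_iota size_poly.
by have := congr1 (fun q : {poly R} => q`_i)%R p0; rewrite coef_poly hi coef0.
Qed.

Lemma bisum_coef_eq0_of_nodes c K :
  (forall a b, (a < K)%N -> (b < K)%N -> bisum c K (node a) (node b) = 0) ->
  forall i j, (i < K)%N -> (j < K)%N -> c i j = 0.
Proof.
move=> h i j hi hj; apply: (coef_eq0_of_nodes (d := fun i => c i j)) hi => a ha.
by move: j hj; apply: coef_eq0_of_nodes => b hb; rewrite -bisum_swap; apply: h.
Qed.

Lemma bipoly_eq0_on_box n f : bipoly n f ->
  (forall x y, 0 < x <= / 3 -> 0 < y <= / 3 -> f x y = 0) -> forall x y, f x y = 0.
Proof.
move=> [c [_ hf]] h x y.
have c0 := bisum_coef_eq0_of_nodes (c := c) (K := n.+1).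
rewrite hf /bisum big1_seq // => i; rewrite mem_index_iota => /andP [_ hi].
rewrite big1_seq // => j; rewrite mem_index_iota => /andP [_ hj].
rewrite c0 // => [|a b _ _]; first by rring.
by rewrite -hf; apply: h; apply: node_bounds.
Qed.

Lemma bipoly1_eq0_of_nodes n h : bipoly n (fun x _ => h x) ->
  (forall a, (a <= n)%N -> h (node a) = 0) -> forall x, h x = 0.
Proof.
move=> [c [_ hf]] h0 x.
have c0 : forall i, (i < n.+1)%N -> c i 0%N = 0.
  by apply: coef_eq0_of_nodes => a ha; rewrite -bisum_y0 -hf; apply: h0.
rewrite (hf x 0) bisum_y0 big1_seq // => i; rewrite mem_index_iota => /andP [_ hi].
by rewrite c0 // mul0r.
Qed.

(** * Integration over the triangle *)

Lemma continuous_sum N (F : nat -> R -> R) x : (forall k, continuous (F k) x) ->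
  continuous (fun t => (\sum_(0 <= k < N) F k t)%R) x.
Proof.
move=> hF; elim: N => [|N IH].
  by apply: continuous_ext (continuous_const 0 x) => t; rewrite big_geq.
by apply: continuous_ext (continuous_plus _ _ _ IH (hF N)) => t; rewrite big_nat_recr.
Qed.

Lemma bipoly_continuous n f y x : bipoly n f -> continuous (fun x => f x y) x.
Proof.
move=> [c [_ hf]]; apply: continuous_ext (_ : continuous (fun t => bisum c n.+1 t y) x).
  by move=> t; rewrite hf.
apply: continuous_sum => i; apply: continuous_sum => j; apply: ex_derive_continuous.
by auto_derive.
Qed.

Lemma is_RInt_sum N (F : nat -> R -> R) (I : nat -> R) a b :
  (forall k, is_RInt (F k) a b (I k)) ->
  is_RInt (fun t => (\sum_(0 <= k < N) F k t)%R) a b (\sum_(0 <= k < N) I k)%R.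
Proof.
move=> hF; elim: N => [|N IH].
  have := is_RInt_const a b 0; rewrite scal_zero_r big_geq //.
  by apply: is_RInt_ext => t _; rewrite big_geq.
rewrite big_nat_recr //; apply: is_RInt_ext (is_RInt_plus _ _ _ _ _ _ IH (hF N)) => t _.
by rewrite big_nat_recr.
Qed.

Lemma bipoly_inner_integral n f : bipoly n f -> exists G, bipoly n.+1 (fun x _ => G x) /\
  forall x, is_RInt (f x) 0 (1 - x) (G x).
Proof.
move=> [c [c0 hf]].
pose P i j x := / INR j.+1 * (x ^ i * (1 - x) ^ j.+1).
exists (fun x => \sum_(0 <= i < n.+1) \sum_(0 <= j < n.+1) (c i j * P i j x : R))%R; split.
  apply: (bipoly_coef_sum (G := fun i j x _ => P i j x) n.+1 c0) => i j hij.
  have h1x : bipoly 1 (fun x y : R => 1 - x).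
    by apply: bipoly_ext (bipoly_affine (-1) 0 1) => x y; ring.
  apply: (@bipoly_widen (i + j.+1)); first lia.
  by apply: bipoly_ext (bipolyZ (/ INR j.+1) (bipolyM (bipolyX i bipoly_x) (bipolyX j.+1 h1x))).
move=> x.
have hT i j : is_RInt (fun t => c i j * x ^ i * t ^ j) 0 (1 - x) (c i j * P i j x).
  have hj0 : INR j.+1 <> 0 by apply: not_0_INR.
  have -> : c i j * P i j x =
      scal (c i j * x ^ i) ((1 - x) ^ j.+1 / INR j.+1 - 0 ^ j.+1 / INR j.+1).
    by rewrite /P /scal /= /mult /=; field; exact: hj0.
  apply: is_RInt_ext (is_RInt_scal _ _ _ _ _ (is_RInt_pow 0 (1 - x) j)) => t _.
  by rewrite /scal /= /mult /=; ring.
apply: is_RInt_ext (is_RInt_sum (fun i => is_RInt_sum (hT i))) => t _.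
by rewrite hf.
Qed.

Lemma int_T_ext f g : (forall x y, f x y = g x y) -> int_T f = int_T g.
Proof.
move=> e; have -> // : f = g.
by apply: functional_extensionality => x; apply: functional_extensionality => y.
Qed.

Lemma bipoly_int_T n f : bipoly n f -> exists G, bipoly n.+1 (fun x _ => G x) /\
  (forall x, is_RInt (f x) 0 (1 - x) (G x)) /\ is_RInt G 0 1 (int_T f).
Proof.
move=> hf; have [G [hG hGf]] := bipoly_inner_integral hf.
exists G; do 2!split=> //.
rewrite /int_T (RInt_ext _ G) => [|x _]; last exact: is_RInt_unique.
apply: RInt_correct; apply: ex_RInt_continuous => z _; exact: bipoly_continuous hG.
Qed.

Lemma int_T_lin n m f g a b : bipoly n f -> bipoly m g ->
  int_T (fun x y => a * f x y + b * g x y) = a * int_T f + b * int_T g.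
Proof.
move=> hf hg.
have [F [_ [hFx hF]]] := bipoly_int_T hf; have [G [_ [hGx hG]]] := bipoly_int_T hg.
rewrite /int_T (RInt_ext _ (fun x => a * F x + b * G x)) => [|x _].
  apply: is_RInt_unique.
  exact: (is_RInt_plus _ _ _ _ _ _ (is_RInt_scal _ _ _ a _ hF) (is_RInt_scal _ _ _ b _ hG)).
apply: is_RInt_unique.
exact: (is_RInt_plus _ _ _ _ _ _ (is_RInt_scal _ _ _ a _ (hFx x)) (is_RInt_scal _ _ _ b _ (hGx x))).
Qed.

Lemma int_T_sum n N (F : nat -> R -> R -> R) :
  (forall k, (k < N)%N -> bipoly n (F k)) ->
  int_T (fun x y => \sum_(0 <= k < N) F k x y)%R = (\sum_(0 <= k < N) int_T (F k))%R.
Proof.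
elim: N => [|N IH] hF.
  rewrite big_geq // (int_T_ext (g := fun x y => 0 * 0 + 0 * 0)) => [|x y]; last first.
    by rewrite big_geq // Rmult_0_l Rplus_0_l.
  by rewrite (int_T_lin 0 0 (bipoly_cst 0 0) (bipoly_cst 0 0)) !Rmult_0_l Rplus_0_l.
have hFN := hF N (ltnSn N); have {}hF k : (k < N)%N -> bipoly n (F k) by move=> ?; apply: hF; lia.
rewrite (int_T_ext (g := fun x y => 1 * (\sum_(0 <= k < N) F k x y)%R + 1 * F N x y)).
  by rewrite (int_T_lin 1 1 (bipoly_sum hF) hFN) IH // big_nat_recr //= !Rmult_1_l.
by move=> x y; rewrite big_nat_recr //= !Rmult_1_l.
Qed.

Lemma RInt_gt0_at (g : R -> R) a b x0 : a < x0 < b ->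
  (forall x, a <= x <= b -> continuous g x) ->
  (forall x, a < x < b -> 0 <= g x) -> 0 < g x0 -> 0 < RInt g a b.
Proof.
move=> hx hc hpos hg0.
have eps : 0 < g x0 / 2 by lra.
have [d hd] := hc x0 ltac:(lra) _ (locally_ball (g x0) (mkposreal _ eps)).
have near_pos y : Rabs (y - x0) < d -> 0 < g y.
  move=> hy; have := hd y hy.
  rewrite /ball /= /AbsRing_ball /abs /minus /plus /opp /= => h.
  have := Rabs_def2 _ _ h; lra.
have dpos := cond_pos d.
set c1 := Rmax a (x0 - d / 2); set d1 := Rmin b (x0 + d / 2).
have hc1 : a <= c1 /\ c1 < x0 /\ x0 - d / 2 <= c1.
  by rewrite /c1; split; [apply: Rmax_l | split; [apply: Rmax_lub_lt; lra | apply: Rmax_r]].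
have hd1 : d1 <= b /\ x0 < d1 /\ d1 <= x0 + d / 2.
  by rewrite /d1; split; [apply: Rmin_l | split; [apply: Rmin_glb_lt; lra | apply: Rmin_r]].
have ex u v : a <= u -> u <= v -> v <= b -> ex_RInt g u v.
  move=> h1 h2 h3; apply: ex_RInt_continuous => z hz; apply: hc.
  by rewrite Rmin_left in hz; [rewrite Rmax_right in hz; lra | lra].
rewrite -(RInt_Chasles g a c1 b); [|apply: ex; lra..].
rewrite -(RInt_Chasles g c1 d1 b); [|apply: ex; lra..].
have i1 : 0 <= RInt g a c1.
  by apply: RInt_ge_0; [lra | apply: ex; lra | move=> x hx'; apply: hpos; lra].
have i3 : 0 <= RInt g d1 b.
  by apply: RInt_ge_0; [lra | apply: ex; lra | move=> x hx'; apply: hpos; lra].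
have i2 : 0 < RInt g c1 d1.
  apply: RInt_gt_0; first lra.
    by move=> x hx'; apply: near_pos; apply: Rabs_def1; lra.
  by move=> x hx'; apply: hc; lra.
rewrite /plus /=; lra.
Qed.

Lemma int_T_eq0_nonneg n g : bipoly n g ->
  (forall x y, 0 < x -> 0 < y -> x + y < 1 -> 0 <= g x y) -> int_T g = 0 ->
  forall x y, 0 < x -> 0 < y -> x + y < 1 -> g x y = 0.
Proof.
move=> hg hpos h0 x0 y0 hx hy hxy.
have [G [hG [hGx hGI]]] := bipoly_int_T hg.
have hGv x : G x = RInt (g x) 0 (1 - x) by symmetry; apply: is_RInt_unique.
case: (Rle_lt_or_eq_dec 0 (g x0 y0)) => [|hgt|//]; first exact: hpos.
suff : 0 < int_T g by lra.
rewrite -(is_RInt_unique _ _ _ _ hGI); apply: (RInt_gt0_at (x0 := x0)); first lra.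
- by move=> x _; apply: bipoly_continuous hG.
- move=> x hx'; rewrite hGv; apply: RInt_ge_0; [lra | by exists (G x) |].
  by move=> y hy'; apply: hpos; lra.
- rewrite hGv; apply: (RInt_gt0_at (x0 := y0)); first lra.
  + by move=> y _; apply: bipoly_continuous (bipoly_swap hg).
  + by move=> y hy'; apply: hpos; lra.
  + done.
Qed.

(** * Uniqueness *)

Lemma bipoly_factor_y m u : bipoly m.+1 u -> (forall t, 0 <= t <= 1 -> u t 0 = 0) ->
  exists w, bipoly m w /\ forall x y, u x y = y * w x y.
Proof.
move=> [c [c0 hu]] hu0.
have c_0 : forall i, (i < m.+2)%N -> c i 0%N = 0.
  apply: coef_eq0_of_nodes => k _; rewrite -bisum_y0 -hu; apply: hu0.
  by have := node_bounds k; lra.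
exists (bisum (fun i j => c i j.+1) m.+1); split.
  by apply: bipoly_bisum => i j h; apply: c0; lia.
move=> x y; rewrite hu /bisum big_nat_recr //=.
rewrite [X in (_ + X)%R]big1_seq ?addr0 => [|j]; last first.
  rewrite mem_index_iota => /andP [_ hj]; case: j hj => [|j] hj.
    by rewrite c_0 //; rring.
  by rewrite c0; [rring | lia].
rewrite RmultE mulr_sumr; apply: eq_big_nat => i /andP [_ hi].
rewrite big_nat_recl // c_0; last lia.
rewrite mulr_sumr Rmult_0_l Rmult_0_l add0r; apply: eq_bigr => j _; rring.
Qed.

Definition edge_coord (Z : edge) (x y : R) : R :=
  match Z with EI => y | EII => x | EIII => 1 - x - y end.

Lemma bipoly_edge_coord Z : bipoly 1 (edge_coord Z).
Proof.
case: Z; [exact: bipoly_y | exact: bipoly_x |].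
by apply: bipoly_ext (bipoly_affine (-1) (-1) 1) => x y /=; ring.
Qed.

Lemma edge_coord_gt0 Z x y : 0 < x -> 0 < y -> x + y < 1 -> 0 < edge_coord Z x y.
Proof. by case: Z => /=; lra. Qed.

Lemma bipoly_factor_edge m Z u : bipoly m.+1 u ->
  (forall t, 0 <= t <= 1 -> gamma Z u t = 0) ->
  exists w, bipoly m w /\ forall x y, u x y = edge_coord Z x y * w x y.
Proof.
case: Z => /= hu hu0.
- exact: bipoly_factor_y.
- have [w [hw e]] := bipoly_factor_y (bipoly_swap hu) hu0.
  by exists (fun x y => w y x); split; [exact: bipoly_swap | move=> x y; rewrite -e].
- have hu' := bipoly_comp hu (bipoly_edge_coord EIII) bipoly_x.
  have hu'0 t : 0 <= t <= 1 -> u (1 - t - 0) t = 0.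
    by move=> ht; rewrite Rminus_0_r; apply: hu0.
  have [w [hw e]] := bipoly_factor_y hu' hu'0.
  exists (fun x y => w y (1 - x - y)); split.
    exact: bipoly_comp hw bipoly_y (bipoly_edge_coord EIII).
  by move=> x y; rewrite -e /=; congr (u _ _); ring.
Qed.

Lemma bipoly0_const u : bipoly 0 u -> forall x y, u x y = u 0 0.
Proof. by move=> [c [_ hu]] x y; rewrite !hu /bisum !big_nat1 /=; ring. Qed.

Lemma int_T_weighted_sqr_eq0 n m l w : bipoly n l -> bipoly m w ->
  (forall x y, 0 < x -> 0 < y -> x + y < 1 -> 0 < l x y) ->
  int_T (fun x y => l x y * w x y * w x y) = 0 -> forall x y, w x y = 0.
Proof.
move=> hl hw l_gt0 int0.
have lw2_ge0 x y : 0 < x -> 0 < y -> x + y < 1 -> 0 <= l x y * w x y * w x y.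
  move=> hx hy hxy; rewrite Rmult_assoc.
  by apply: Rmult_le_pos; [apply: Rlt_le; apply: l_gt0 | apply: Rle_0_sqr].
have lw2_eq0 := int_T_eq0_nonneg (bipolyM (bipolyM hl hw) hw) lw2_ge0 int0.
apply: bipoly_eq0_on_box hw _ => x y hx hy.
have hlxy : 0 < l x y by apply: l_gt0; lra.
have := lw2_eq0 x y ltac:(lra) ltac:(lra) ltac:(lra); rewrite Rmult_assoc.
by case/Rmult_integral => [|/Rmult_integral []//]; lra.
Qed.

Lemma Pperp_gamma_eq0 n Z u : Pperp n u ->
  (forall t, 0 <= t <= 1 -> gamma Z u t = 0) -> forall x y, u x y = 0.
Proof.
case: n => [|m] [/is_poly2_bipoly hu orth] hu0.
  move=> x y; have := hu0 0 ltac:(lra); rewrite (bipoly0_const hu x y).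
  by case: Z {hu0} => /=; rewrite ?(bipoly0_const hu (1 - 0)).
have [w [hw e]] := bipoly_factor_edge hu hu0.
have int0 : int_T (fun x y => edge_coord Z x y * w x y * w x y) = 0.
  by rewrite -(orth w); [apply: int_T_ext => x y; rewrite e | exact/is_poly2_bipoly].
have w0 := int_T_weighted_sqr_eq0 (bipoly_edge_coord Z) hw (@edge_coord_gt0 Z) int0.
by move=> x y; rewrite e w0 Rmult_0_r.
Qed.

Lemma gamma_lin Z u1 u2 a b t :
  gamma Z (fun x y => a * u1 x y + b * u2 x y) t = a * gamma Z u1 t + b * gamma Z u2 t.
Proof. by case: Z. Qed.

Lemma Pperp_intro n u : bipoly n u ->
  (forall m, n = m.+1 -> forall w, bipoly m w -> int_T (fun x y => u x y * w x y) = 0) ->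
  Pperp n u.
Proof.
move=> hu orth; split; first exact/is_poly2_bipoly.
by case: n hu orth => // m hu orth w /is_poly2_bipoly; apply: orth.
Qed.

Lemma Pperp_lin n u1 u2 a b : Pperp n u1 -> Pperp n u2 ->
  Pperp n (fun x y => a * u1 x y + b * u2 x y).
Proof.
move=> [/is_poly2_bipoly h1 o1] [/is_poly2_bipoly h2 o2].
apply: Pperp_intro => [|m hm w hw]; first exact: bipolyD (bipolyZ a h1) (bipolyZ b h2).
subst n; rewrite (int_T_ext (g := fun x y => a * (u1 x y * w x y) + b * (u2 x y * w x y))).
  by rewrite (int_T_lin _ _ (bipolyM h1 hw) (bipolyM h2 hw)) o1 ?o2 1?Rmult_0_r;
    [ring | exact/is_poly2_bipoly ..].
by move=> x y; ring.
Qed.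

Lemma extension_unique n Z u1 u2 : Pperp n u1 -> Pperp n u2 ->
  (forall t, 0 <= t <= 1 -> gamma Z u1 t = gamma Z u2 t) -> u1 = u2.
Proof.
move=> h1 h2 hg.
have hd0 := Pperp_gamma_eq0 (Z := Z) (Pperp_lin 1 (-1) h1 h2).
apply: functional_extensionality => x; apply: functional_extensionality => y.
suff : 1 * u1 x y + -1 * u2 x y = 0 by lra.
by apply: hd0 => t ht; rewrite gamma_lin hg //; ring.
Qed.

(** * Existence *)

Lemma linear_inj_surj (K : fieldType) (vT : vectType K) (f : {linear vT -> vT}) :
  (forall u, f u = 0%R -> u = 0%R) -> forall v, exists u, f u = v.
Proof.
move=> ker0 v; exists ((linfun f)^-1%VF v).
rewrite -[LHS]lfunE lker0_lfunVK //; apply/lker0P => x y; rewrite !lfunE => e.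
by apply/eqP; rewrite -subr_eq0; apply/eqP/ker0; rewrite raddfB /= e subrr.
Qed.

Lemma int_T_scal n k f : bipoly n f -> int_T (fun x y => k * f x y) = k * int_T f.
Proof.
move=> hf; rewrite (int_T_ext (g := fun x y => k * f x y + 0 * 0)) => [|x y]; last ring.
by rewrite (int_T_lin _ _ hf (bipoly_cst 0 0)); ring.
Qed.

Lemma bipoly_mul_monom n a b u :
  bipoly n u -> bipoly (n + (a + b)) (fun x y => u x y * (x ^ a * y ^ b)).
Proof.
by move=> hu; apply: bipoly_ext (bipolyM hu (bipoly_monom 1 (leqnn _))) => x y; ring.
Qed.

Lemma int_T_orth_monomials n m u : bipoly n u ->
  (forall a b, (a + b <= m)%N -> int_T (fun x y => u x y * (x ^ a * y ^ b)) = 0) ->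
  forall w, bipoly m w -> int_T (fun x y => u x y * w x y) = 0.
Proof.
move=> hu orth w [d [d0 hw]].
pose F a b x y := d a b * (u x y * (x ^ a * y ^ b)).
have hF a b : (a < m.+1)%N -> (b < m.+1)%N -> bipoly (n + (m + m)) (F a b).
  by move=> ha hb; apply: bipolyZ; apply: bipoly_widen (bipoly_mul_monom a b hu); lia.
rewrite (int_T_ext (g := fun x y => \sum_(0 <= a < m.+1) \sum_(0 <= b < m.+1) F a b x y)%R).
  rewrite (int_T_sum (n := n + (m + m))) => [|a ha]; last by apply: bipoly_sum => b hb; apply: hF.
  rewrite big1_seq // => a; rewrite mem_index_iota => /andP [_ ha].
  rewrite (int_T_sum (n := n + (m + m))) => [|b hb]; last exact: hF.
  rewrite big1_seq // => b; rewrite mem_index_iota => /andP [_ hb].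
  rewrite /F (int_T_scal _ (bipoly_mul_monom a b hu)).
  case: (ltnP m (a + b)) => hab; first by rewrite d0 // Rmult_0_l.
  by rewrite orth // Rmult_0_r.
move=> x y; rewrite hw /bisum RmultE mulr_sumr; apply: eq_bigr => a _.
by rewrite mulr_sumr; apply: eq_bigr => b _; rewrite /F; rring.
Qed.

Definition mx_coef n (c : 'M[R]_n.+1) (i j : nat) : R :=
  if (i + j <= n)%N then c (inord i) (inord j) else 0.

Definition mx_bipoly n (c : 'M[R]_n.+1) : R -> R -> R := bisum (mx_coef c) n.+1.

Lemma bipoly_mx n (c : 'M[R]_n.+1) : bipoly n (mx_bipoly c).
Proof. by apply: bipoly_bisum => i j h; rewrite /mx_coef; case: ifP => //; lia. Qed.

Lemma mx_bipoly_lin n k (c d : 'M[R]_n.+1) x y :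
  mx_bipoly (k *: c + d)%R x y = k * mx_bipoly c x y + 1 * mx_bipoly d x y.
Proof.
rewrite /mx_bipoly -!bisumZ -bisumD; apply: bisum_ext => i j; rewrite /mx_coef.
by case: ifP => _; rewrite ?mxE; rring.
Qed.

(* Entry (a, b) is the moment of [mx_bipoly c] against [x^a y^b] if [a + b < n], its
   trace at [node a] if [a + b = n], and, if [a + b > n], where [mx_bipoly c] ignores
   the entry, the entry itself: this makes [dof] an endomorphism of square matrices. *)
Definition dof_entry n Z (c : 'M[R]_n.+1) (a b : nat) : R :=
  if (a + b < n)%N then int_T (fun x y => mx_bipoly c x y * (x ^ a * y ^ b))
  else if (a + b == n)%N then gamma Z (mx_bipoly c) (node a)
  else c (inord a) (inord b).

Definition dof n Z (c : 'M[R]_n.+1) : 'M[R]_n.+1 := \matrix_(a, b) dof_entry Z c a b.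

Lemma dof_is_linear n Z : linear (@dof n Z).
Proof.
move=> k c d; apply/matrixP => a b; rewrite !mxE /dof_entry.
case: ifP => _.
  rewrite (int_T_ext (g := fun x y => k * (mx_bipoly c x y * (x ^ a * y ^ b)) +
                                    1 * (mx_bipoly d x y * (x ^ a * y ^ b)))).
    by rewrite (int_T_lin _ _ (bipoly_mul_monom a b (bipoly_mx c))
                 (bipoly_mul_monom a b (bipoly_mx d))); rring.
  by move=> x y; rewrite mx_bipoly_lin; ring.
case: ifP => _; last by rewrite !mxE.
have -> : mx_bipoly (k *: c + d)%R = fun x y => k * mx_bipoly c x y + 1 * mx_bipoly d x y.
  by do 2!apply: functional_extensionality => ?; rewrite mx_bipoly_lin.
by rewrite gamma_lin Rmult_1_l.
Qed.

HB.instance Definition _ n Z := GRing.isLinear.Build R _ _ _ (@dof n Z) (@dof_is_linear n Z).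

Lemma bipoly_gamma n Z u : bipoly n u -> bipoly n (fun x _ => gamma Z u x).
Proof.
move=> hu; case: Z => /=.
- exact: bipoly_comp hu bipoly_x (bipoly_cst 1 0).
- exact: bipoly_comp hu (bipoly_cst 1 0) bipoly_x.
- by apply: bipoly_comp hu _ bipoly_x; apply: bipoly_ext (bipoly_affine (-1) 0 1) => x y; ring.
Qed.

Lemma dof_entry_mx n Z (c : 'M[R]_n.+1) a b :
  (a <= n)%N -> (b <= n)%N -> dof Z c (inord a) (inord b) = dof_entry Z c a b.
Proof. by move=> ha hb; rewrite mxE !inordK. Qed.

Lemma dof_Pperp n Z (c : 'M[R]_n.+1) :
  (forall a b, (a + b < n)%N -> dof Z c (inord a) (inord b) = 0) -> Pperp n (mx_bipoly c).
Proof.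
move=> h; apply: Pperp_intro (bipoly_mx c) _ => m hm.
apply: (int_T_orth_monomials (bipoly_mx c)) => a b hab.
by rewrite -(h a b) ?dof_entry_mx /dof_entry ?ifT //; lia.
Qed.

Lemma dof_gamma n Z (c : 'M[R]_n.+1) a : (a <= n)%N ->
  dof Z c (inord a) (inord (n - a)) = gamma Z (mx_bipoly c) (node a).
Proof.
move=> ha; rewrite dof_entry_mx ?leq_subr // /dof_entry.
by rewrite subnKC // ltnn eqxx.
Qed.

Lemma dof_inj n Z (c : 'M[R]_n.+1) : dof Z c = 0%R -> c = 0%R.
Proof.
move=> /matrixP c0.
have hc a b : dof Z c a b = 0 by rewrite c0 mxE.
have hP : Pperp n (mx_bipoly c) by apply: dof_Pperp => a b _; apply: hc.
have hg t : 0 <= t <= 1 -> gamma Z (mx_bipoly c) t = 0.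
  move=> _; apply: bipoly1_eq0_of_nodes (bipoly_gamma Z (bipoly_mx c)) _ t => a ha.
  by rewrite -dof_gamma.
have coef0 := bisum_coef_eq0_of_nodes (c := mx_coef c) (K := n.+1).
apply/matrixP => a b; rewrite mxE; case: (leqP (a + b) n) => hab.
  by have := coef0 (fun _ _ _ _ => Pperp_gamma_eq0 hP hg _ _) a b (ltn_ord a) (ltn_ord b);
     rewrite /mx_coef hab !inord_val.
by have := hc a b; rewrite mxE /dof_entry ltnNge ltnW // ifF ?inord_val //; lia.
Qed.

Lemma gamma_eq_of_nodes n Z u v : bipoly n u -> is_poly1 n v ->
  (forall a, (a <= n)%N -> gamma Z u (node a) = v (node a)) -> forall t, gamma Z u t = v t.
Proof.
move=> hu hv h t.
have huv := bipolyD (bipoly_gamma Z hu) (bipolyZ (-1) (is_poly1_bipoly hv)).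
suff : gamma Z u t + -1 * v t = 0 by lra.
by apply: bipoly1_eq0_of_nodes huv _ t => a ha; rewrite h //; ring.
Qed.

Lemma extension_exists n Z v : is_poly1 n v ->
  exists u, Pperp n u /\ forall t, gamma Z u t = v t.
Proof.
move=> hv.
pose target : 'M[R]_n.+1 := (\matrix_(a, b) if (a + b == n)%N then v (node a) else 0)%R.
have [c hc] := linear_inj_surj (@dof_inj n Z) target.
have hcT a b : dof Z c a b = if (a + b == n)%N then v (node a) else 0.
  by rewrite hc mxE.
exists (mx_bipoly c); split.
  apply: (dof_Pperp (Z := Z)) => a b hab; rewrite hcT !inordK; try lia.
  by rewrite ifF //; apply/eqP; lia.
apply: gamma_eq_of_nodes (bipoly_mx c) hv _ => a ha.
rewrite -(dof_gamma Z) // hcT !inordK; try lia.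
by rewrite subnKC // eqxx.
Qed.

Definition extension n Z (v : R -> R) : R -> R -> R :=
  epsilon (inhabits (fun _ _ => 0))
    (fun u => Pperp n u /\ forall t, 0 <= t <= 1 -> v t = gamma Z u t).

Lemma extension_spec n Z v : is_poly1 n v ->
  Pperp n (extension n Z v) /\ forall t, 0 <= t <= 1 -> v t = gamma Z (extension n Z v) t.
Proof.
move=> hv; have [u [hu hg]] := extension_exists Z hv.
have hex : exists u, Pperp n u /\ forall t, 0 <= t <= 1 -> v t = gamma Z u t.
  by exists u; split=> // t _; rewrite hg.
exact: (epsilon_spec _ _ hex).
Qed.

Lemma extension_lin n Z v w a b : is_poly1 n v -> is_poly1 n w ->
  extension n Z (fun t => a * v t + b * w t) =
  (fun x y => a * extension n Z v x y + b * extension n Z w x y).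
Proof.
move=> hv hw; have [hPv hgv] := extension_spec Z hv; have [hPw hgw] := extension_spec Z hw.
have [hP hg] := extension_spec Z (is_poly1_lin a b hv hw).
apply: (extension_unique (Z := Z) hP (Pperp_lin a b hPv hPw)) => t ht.
by rewrite gamma_lin -hg // -hgv // -hgw.
Qed.

Theorem lemma13 (n : nat) (Z : edge) :
  (forall v : R -> R, is_poly1 n v ->
     exists! u : R -> R -> R,
       Pperp n u /\ (forall t, 0 <= t <= 1 -> v t = gamma Z u t)) /\
  (exists E : (R -> R) -> (R -> R -> R),
     (forall v, is_poly1 n v ->
        Pperp n (E v) /\ (forall t, 0 <= t <= 1 -> v t = gamma Z (E v) t)) /\
     (forall v w a b, is_poly1 n v -> is_poly1 n w ->
        E (fun t => a * v t + b * w t) = (fun x y => a * E v x y + b * E w x y))).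
Proof.
split; last first.
  by exists (extension n Z); split=> [v|v w a b]; [exact: extension_spec | exact: extension_lin].
move=> v hv; exists (extension n Z v); split; first exact: extension_spec.
move=> u [hu hgu]; have [hP hg] := extension_spec Z hv.
by apply: (extension_unique (Z := Z) hP hu) => t ht; rewrite -hg // -hgu.
Qed.
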